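(* Let $d \ge 1$, $\rho \ge 0$, and let $r^{(1)}, \dots, r^{(\rho)} \in (0,1)^d$ be pairwise incomparable points such that for each $j \in [d]$ the values $r^{(i)}_j$, $i \in [\rho]$, are distinct. Then the number $\gamma$ of generators of their record-setting region satisfies $$\gamma \le \binom{\rho + d - 1}{d-1}.$$
   Context: For $x,y \in \mathbb{R}^d$, $x \prec y$ means $x_j < y_j$ for all $j \in [d]$, and $x \le y$ means $x_j \le y_j$ for all $j$. The record-setting region of points $r^{(1)},\dots,r^{(\rho)}$ is $S := \{x \in [0,1)^d : x \not\prec r^{(i)} \text{ for all } i \in [\rho]\}$, and its generators are the minimal elements of $S$ with respect to $\le$. *)

From HB Require Import structures.
From mathcomp Require Import all_boot all_order all_algebra.
Set Implicit Arguments. Unset Strict Implicit. Unset Printing Implicit Defensive.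
Import Order.TTheory GRing.Theory Num.Theory.
Local Open Scope ring_scope.

Definition vlt (R : realFieldType) (d : nat) (x y : 'rV[R]_d) : bool :=
  [forall j : 'I_d, x ord0 j < y ord0 j].

Definition vle (R : realFieldType) (d : nat) (x y : 'rV[R]_d) : bool :=
  [forall j : 'I_d, x ord0 j <= y ord0 j].

Definition in_open_cube (R : realFieldType) (d : nat) (x : 'rV[R]_d) : bool :=
  [forall j : 'I_d, (0 < x ord0 j) && (x ord0 j < 1)].

Definition in_halfopen_cube (R : realFieldType) (d : nat) (x : 'rV[R]_d) : bool :=
  [forall j : 'I_d, (0 <= x ord0 j) && (x ord0 j < 1)].

Definition record_region (R : realFieldType) (d rho : nat)
    (r : 'I_rho -> 'rV[R]_d) (x : 'rV[R]_d) : bool :=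
  in_halfopen_cube x && [forall i : 'I_rho, ~~ vlt x (r i)].

Definition generator (R : realFieldType) (d rho : nat)
    (r : 'I_rho -> 'rV[R]_d) (x : 'rV[R]_d) : Prop :=
  record_region r x /\
  (forall y : 'rV[R]_d, record_region r y -> vle y x -> y = x).

(* For a generator x and a coordinate j, let N_j(x) be the number of points
   r(i) with x_l < r(i)_l for all l >= j.  Then N_0(x) = 0, and N_j(x) is
   nondecreasing in j and at most rho.  Minimality of x forces each positive
   coordinate x_j to equal r(k)_j for a point r(k) that dominates x strictly in
   all other coordinates; hence, going down from the last coordinate, x_j is
   determined by N_j(x) and the coordinates above j.  So x is determined by the
   nondecreasing sequence (N_1(x), ..., N_(d-1)(x)) with values in [0, rho], and
   there are binomial(rho + d - 1, d - 1) such sequences. *)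
From HB Require Import structures.
From mathcomp Require Import all_boot all_order all_algebra zify.
Import Order.TTheory GRing.Theory Num.Theory.
Local Open Scope ring_scope.

Section RecordRegion.
Context {R : realFieldType} {d rho : nat} (r : 'I_rho -> 'rV[R]_d).

Definition set_coord (x : 'rV[R]_d) (j : 'I_d) (z : R) : 'rV[R]_d :=
  \row_l (if l == j then z else x ord0 l).

Lemma set_coordE x j z l :
  set_coord x j z ord0 l = if l == j then z else x ord0 l.
Proof. by rewrite mxE. Qed.

Definition dominates_off (x : 'rV[R]_d) (j : 'I_d) (i : 'I_rho) : bool :=
  [forall l, (l != j) ==> (x ord0 l < r i ord0 l)].

Lemma record_region_set_coord x j z :
  record_region r x -> 0 <= z <= x ord0 j ->
  (forall i, dominates_off x j i -> r i ord0 j <= z) ->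
  record_region r (set_coord x j z).
Proof.
move=> /andP [/forallP cube_x /forallP rec_x] /andP [z_ge0 z_le] zge.
apply/andP; split.
  apply/forallP => l; rewrite set_coordE; case: eqP => [_|_]; last exact: cube_x.
  by rewrite z_ge0 (le_lt_trans z_le) //; case/andP: (cube_x j).
apply/forallP => i; rewrite /vlt negb_forall.
case Di: (dominates_off x j i).
  by apply/existsP; exists j; rewrite set_coordE eqxx -leNgt zge.
move/negbT: Di; rewrite negb_forall => /existsP [l].
by rewrite negb_imply => /andP [lj ?]; apply/existsP; exists l; rewrite set_coordE (negbTE lj).
Qed.

Lemma generator_coord_witness (x : 'rV[R]_d) (j : 'I_d) :
  0 < x ord0 j -> generator r x ->
  exists2 k, x ord0 j = r k ord0 j & dominates_off x j k.
Proof.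
move=> xj_gt0 [Sx minx].
have [/existsP [k /andP [/eqP xk Dk]]|no_witness] :=
  boolP [exists k, (x ord0 j == r k ord0 j) && dominates_off x j k].
  by exists k.
have lt_xj i : dominates_off x j i -> r i ord0 j < x ord0 j.
  move=> Di; move: Sx => /andP [_ /forallP /(_ i)].
  rewrite /vlt negb_forall => /existsP [l].
  have [->|lj] := eqVneq l j; last by move: Di => /forallP /(_ l); rewrite lj /= => ->.
  rewrite -leNgt le_eqVlt => /orP [/eqP xi|//].
  by move: no_witness; rewrite negb_exists => /forallP /(_ i); rewrite xi eqxx Di.
pose z := \big[Num.max/0]_(i | dominates_off x j i) r i ord0 j.
have z_ge0 : 0 <= z.
  by apply: (big_rec (fun v => 0 <= v)) => // i v _ hv; rewrite le_max hv orbT.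
have z_lt : z < x ord0 j.
  by apply: (big_rec (fun v => v < x ord0 j)) => // i v Di hv; rewrite gt_max hv lt_xj.
have z_ub i : dominates_off x j i -> r i ord0 j <= z.
  by move=> Di; rewrite /z (bigD1 i) //= le_max lexx.
have Sy : record_region r (set_coord x j z).
  by apply: record_region_set_coord; rewrite ?z_ge0 ?ltW.
have le_yx : vle (set_coord x j z) x.
  by apply/forallP => l; rewrite set_coordE; case: eqP => [->|//]; apply: ltW.
have /(congr1 (fun y : 'rV_d => y ord0 j)) := minx _ Sy le_yx.
by rewrite set_coordE eqxx => zx; rewrite zx ltxx in z_lt.
Qed.

Definition dominators (x : 'rV[R]_d) (j : nat) : {set 'I_rho} :=
  [set i | [forall l : 'I_d, (j <= l)%N ==> (x ord0 l < r i ord0 l)]].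

Lemma dominatorsS x : {homo dominators x : a b / (a <= b)%N >-> a \subset b}.
Proof.
move=> a b ab; apply/subsetP => i; rewrite !inE => /forallP dom.
by apply/forallP => l; apply/implyP => bl; move: (dom l); rewrite (leq_trans ab bl).
Qed.

Lemma dominators0 x : record_region r x -> dominators x 0 = set0.
Proof.
move=> /andP [_ /forallP rec_x]; apply/setP => i; rewrite !inE.
by apply/negbTE; apply: contra (rec_x i) => /forallP dom; apply/forallP => l; apply: dom.
Qed.

Lemma generator_coord_eq x y (j : 'I_d) : generator r x -> generator r y ->
  (forall l : 'I_d, (j < l)%N -> x ord0 l = y ord0 l) ->
  #|dominators x j| = #|dominators y j| -> x ord0 j = y ord0 j.
Proof.
wlog: x y / x ord0 j <= y ord0 j.
  move=> W Gx Gy E C; have [xy|/ltW yx] := leP (x ord0 j) (y ord0 j); first exact: W.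
  by symmetry; apply: (W y x yx) => // l jl; rewrite E.
rewrite le_eqVlt => /orP [/eqP //|xy] Gx Gy E C.
have E' (l : 'I_d) : (j <= l)%N -> l != j -> x ord0 l = y ord0 l.
  by move=> jl lj; apply: E; rewrite ltn_neqAle jl andbT; apply: contra lj => /eqP/val_inj->.
have y_gt0 : 0 < y ord0 j.
  by apply: le_lt_trans xy; case: Gx => /andP [/forallP /(_ j) /andP []].
have [k yk Dk] := @generator_coord_witness y j y_gt0 Gy.
suff: dominators y j \proper dominators x j by move/proper_card; rewrite C ltnn.
apply/properP; split.
  apply/subsetP => i; rewrite !inE => /forallP dom; apply/forallP => l.
  apply/implyP => jl; have [->|lj] := eqVneq l j; first exact: lt_trans xy (implyP (dom j) _).
  by rewrite E' //; apply: (implyP (dom l)).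
exists k; rewrite !inE.
  apply/forallP => l; apply/implyP => jl; have [->|lj] := eqVneq l j; first by rewrite -yk.
  by rewrite E' //; apply: (implyP (forallP Dk l)).
by rewrite negb_forall; apply/existsP; exists j; rewrite leqnn -yk ltxx.
Qed.

Lemma generator_eq x y : generator r x -> generator r y ->
  (forall j, (0 < j < d)%N -> #|dominators x j| = #|dominators y j|) -> x = y.
Proof.
move=> Gx Gy C.
suff above k (l : 'I_d) : (d - k <= l)%N -> x ord0 l = y ord0 l.
  by apply/rowP => l; apply: (above d); rewrite subnn.
elim: k l => [|k IH] l dkl; first by move: dkl (ltn_ord l); lia.
have [|lt_l] := leqP (d - k) l; first exact: IH.
apply: generator_coord_eq => // [l' ll'|]; first by apply: IH; move: ll' (ltn_ord l'); lia.
have [l0|l_gt0] := posnP l; first by rewrite l0 !dominators0 //; [case: Gy | case: Gx].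
by apply: C; rewrite l_gt0 ltn_ord.
Qed.

Definition dominator_profile (x : 'rV[R]_d) : (d - 1).-tuple 'I_rho.+1 :=
  [tuple inord #|dominators x i.+1| | i < d - 1].

Lemma dominator_profileE x : map val (dominator_profile x) =
  [seq #|dominators x k.+1| | k <- iota 0 (d - 1)].
Proof.
rewrite -val_enum_ord -!map_comp; apply: eq_map => i /=.
by rewrite inordK // ltnS (leq_trans (max_card _)) ?card_ord.
Qed.

Lemma sorted_dominator_profile x : sorted leq (map val (dominator_profile x)).
Proof.
rewrite dominator_profileE; apply: homo_sorted (iota_sorted 0 _) => a b ab.
exact/subset_leq_card/dominatorsS.
Qed.

Lemma dominator_profile_inj (gens : seq 'rV[R]_d) :
  (forall x, x \in gens -> generator r x) -> {in gens &, injective dominator_profile}.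
Proof.
move=> Gg x y xg yg /(congr1 val) /(congr1 (map val)); rewrite !dominator_profileE => exy.
apply: generator_eq (Gg x xg) (Gg y yg) _ => -[//|j] /andP [_ jd].
have jd1 : (j < d - 1)%N by lia.
by have := congr1 (nth 0%N ^~ j) exy; rewrite !(nth_map 0%N) ?size_iota // nth_iota.
Qed.

End RecordRegion.

Theorem theoremT (R : realFieldType) (d rho : nat) (r : 'I_rho -> 'rV[R]_d) :
  (0 < d)%N ->
  (forall i : 'I_rho, in_open_cube (r i)) ->
  (forall i k : 'I_rho, i != k -> ~~ vle (r i) (r k)) ->
  (forall j : 'I_d, injective (fun i : 'I_rho => r i ord0 j)) ->
  forall gens : seq 'rV[R]_d,
    uniq gens -> (forall x, x \in gens -> generator r x) ->
    (size gens <= 'C(rho + d - 1, d - 1))%N.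
Proof.
(* The counting argument needs no general-position assumption on the points. *)
move=> d_gt0 _ _ _ gens uniq_gens Gg.
have inj : {in gens &, injective (dominator_profile r)} by exact: dominator_profile_inj.
rewrite -addnBA // addnC -card_sorted_tuples -(size_map (dominator_profile r)).
rewrite -(card_uniqP (etrans (map_inj_in_uniq inj) uniq_gens)).
apply/subset_leq_card/subsetP => t /mapP [x _ ->].
by rewrite inE sorted_dominator_profile.
Qed.
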